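(* Let $\{c_n\}_{n\ge1}$ be a real sequence with $\sum_{n=1}^\infty|c_n|<+\infty$, and for $n\ge1$ let $\varphi_*^{(n)}(x):=\varphi^{(n)}(x)-\frac12$, $x\in[0,1]$. Let $a<b$ be positive integers. Then for every real $\lambda$, $$\int_0^1\exp\left(\lambda\max_{a\le N\le b}\left|\sum_{n=N}^\infty c_n\varphi_*^{(n)}(x)\right|\right)dx\le 8\exp\left\{\frac{\lambda^2}{2}\sum_{n=a}^\infty (c_n)^2\right\}.$$
   Context: The tent map on $[0,1]$ is $\varphi(x)=2x$ for $x\in[0,1/2]$ and $\varphi(x)=2(1-x)$ for $x\in[1/2,1]$; it is extended to $\mathbb{R}$ by $\varphi(x):=\varphi(x-[x])$, and $\varphi^{(n)}$ denotes the $n$-fold iterate of $\varphi$, so that $\varphi^{(n)}(x)=\varphi(2^{n-1}x)$. *)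

From Stdlib Require Import Reals Lra Lia List.
From Coquelicot Require Import Coquelicot.
Open Scope R_scope.

Definition frac_part (x : R) : R := x - IZR (Int_part x).

Definition tent (y : R) : R :=
  if Rle_dec y (1/2) then 2 * y else 2 * (1 - y).

Definition phi (x : R) : R := tent (frac_part x).

Definition phi_iter (n : nat) (x : R) : R := Nat.iter n phi x.

Definition phi_star (n : nat) (x : R) : R := phi_iter n x - 1/2.

Definition tail_sum (c : nat -> R) (N : nat) (x : R) : R :=
  Series (fun k => c (N + k)%nat * phi_star (N + k)%nat x).

Definition max_range (f : nat -> R) (a b : nat) : R :=
  fold_right Rmax (f a) (map f (seq a (S (b - a)))).

From Stdlib Require Import Reals Lra Lia List.
From Coquelicot Require Import Coquelicot.
Open Scope R_scope.

(* Write T_N = sum_(n = N .. L-1) c_n phi*_n for a truncation level L, and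
   h = 2^-(m+1). Every phi*_n with n > m + 1 has period h, while phi*_(m+1)
   is the line s(x) = 2^(m+1) x - 1/2 on [0, h] and -s(x - h) on [h, 2h].
   So against any h-periodic weight, g(phi*_(m+1)) integrates like the
   symmetric average (g(s) + g(-s)) / 2 with |s| <= 1/2: the terms behave
   like bounded symmetric martingale differences in the reversed order
   N = L - 1, ..., a. With cosh(nu t) <= exp(nu^2 / 2) for |t| <= 1/2 this
   gives int exp(mu T_N) <= exp(mu^2 / 2 * sum c_n^2); moreover exp(mu T_N / 2)
   is a submartingale as N decreases, so Doob's L^2 inequality bounds
   int max_N exp(mu T_N) by 4 exp(mu^2 / 2 * sum c_n^2). Using
   exp(lam |t|) <= exp(lam t) + exp(-lam t) for mu = lam and mu = -lam gives
   the constant 8. Finally L -> oo: sum |c_n| < oo makes the truncations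
   converge uniformly to the tail sums. *)

Lemma exp_le_compat (x y : R) : x <= y -> exp x <= exp y.
Proof. intros [H | ->]; [now apply Rlt_le, exp_increasing | apply Rle_refl]. Qed.

Lemma pow2_pos (n : nat) : 0 < 2 ^ n.
Proof. apply pow_lt; lra. Qed.

Lemma frac_part_of_01 (t : R) : 0 <= t < 1 -> frac_part t = t.
Proof.
  intros Ht. unfold frac_part.
  replace (Int_part t) with 0%Z by (apply Int_part_spec; simpl; lra).
  simpl. ring.
Qed.

Lemma frac_part_range (t : R) : 0 <= frac_part t < 1.
Proof. unfold frac_part. destruct (base_Int_part t). lra. Qed.

Lemma frac_part_add_IZR (t : R) (k : Z) : frac_part (t + IZR k) = frac_part t.
Proof.
  unfold frac_part.
  replace (Int_part (t + IZR k)) with (Int_part t + k)%Z.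
  - rewrite plus_IZR. ring.
  - apply Int_part_spec. rewrite plus_IZR. destruct (base_Int_part t). lra.
Qed.

Lemma phi_add_IZR (t : R) (k : Z) : phi (t + IZR k) = phi t.
Proof. unfold phi. now rewrite frac_part_add_IZR. Qed.

Lemma phi_of_01 (t : R) : 0 <= t <= 1 -> phi t = tent t.
Proof.
  intros Ht. destruct (Req_dec t 1) as [->|Ht1].
  - replace 1 with (0 + IZR 1) at 1 by (simpl; ring).
    rewrite phi_add_IZR. unfold phi, tent. rewrite frac_part_of_01 by lra.
    destruct (Rle_dec 0 (1/2)), (Rle_dec 1 (1/2)); lra.
  - unfold phi. now rewrite frac_part_of_01 by lra.
Qed.

Lemma phi_range (t : R) : 0 <= phi t <= 1.
Proof.
  unfold phi, tent. pose proof (frac_part_range t).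
  destruct (Rle_dec (frac_part t) (1/2)); lra.
Qed.

Lemma phi_phi (t : R) : phi (phi t) = phi (2 * t).
Proof.
  set (f := frac_part t).
  assert (Hf : 0 <= f < 1) by apply frac_part_range.
  replace (2 * t) with (2 * f + IZR (2 * Int_part t))
    by (unfold f, frac_part; rewrite mult_IZR; simpl; ring).
  rewrite phi_add_IZR, phi_of_01 by apply phi_range.
  change (phi t) with (tent f).
  destruct (Rle_lt_dec f (1/2)).
  - rewrite phi_of_01 by lra. unfold tent.
    destruct (Rle_dec f (1/2)); [reflexivity | lra].
  - replace (2 * f) with (2 * f - 1 + IZR 1) by (simpl; ring).
    rewrite phi_add_IZR, phi_of_01 by lra. unfold tent.
    destruct (Rle_dec f (1/2)), (Rle_dec (2 * (1 - f)) (1/2)),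
      (Rle_dec (2 * f - 1) (1/2)); lra.
Qed.

Lemma phi_iter_S (n : nat) (x : R) : phi_iter (S n) x = phi (2 ^ n * x).
Proof.
  induction n as [|n IH].
  - simpl. now rewrite Rmult_1_l.
  - change (phi_iter (S (S n)) x) with (phi (phi_iter (S n) x)).
    rewrite IH, phi_phi. simpl. now rewrite Rmult_assoc.
Qed.

Lemma phi_le_dist_IZR (x : R) (k : Z) : phi x <= 2 * Rabs (x - IZR k).
Proof.
  assert (Hf := frac_part_range x).
  assert (Hx : x = frac_part x + IZR (Int_part x)) by (unfold frac_part; ring).
  unfold phi, tent.
  destruct (Z.le_gt_cases k (Int_part x)) as [K|K].
  - apply IZR_le in K. rewrite Rabs_right by lra.
    destruct (Rle_dec (frac_part x) (1/2)); lra.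
  - assert (K' : (Int_part x + 1 <= k)%Z) by lia.
    apply IZR_le in K'. rewrite plus_IZR in K'.
    rewrite Rabs_left1 by lra.
    destruct (Rle_dec (frac_part x) (1/2)); lra.
Qed.

Lemma phi_eq_dist_IZR (x : R) : exists k : Z, phi x = 2 * Rabs (x - IZR k).
Proof.
  assert (Hf := frac_part_range x).
  assert (Hx : x = frac_part x + IZR (Int_part x)) by (unfold frac_part; ring).
  unfold phi, tent. destruct (Rle_dec (frac_part x) (1/2)).
  - exists (Int_part x). rewrite Rabs_right by lra. lra.
  - exists (Int_part x + 1)%Z. rewrite plus_IZR, Rabs_left1 by lra. lra.
Qed.

Lemma phi_lipschitz (u v : R) : Rabs (phi u - phi v) <= 2 * Rabs (u - v).
Proof.
  destruct (phi_eq_dist_IZR u) as [ku Hu], (phi_eq_dist_IZR v) as [kv Hv].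
  pose proof (phi_le_dist_IZR u kv). pose proof (phi_le_dist_IZR v ku).
  pose proof (Rabs_triang (u - v) (v - IZR kv)).
  pose proof (Rabs_triang (v - u) (u - IZR ku)).
  rewrite Rabs_minus_sym in H2.
  replace (u - v + (v - IZR kv)) with (u - IZR kv) in H1 by ring.
  replace (v - u + (u - IZR ku)) with (v - IZR ku) in H2 by ring.
  apply Rabs_le. lra.
Qed.

Lemma continuity_exp : continuity exp.
Proof. apply derivable_continuous, derivable_exp. Qed.

Lemma continuity_Rmax (f g : R -> R) :
  continuity f -> continuity g -> continuity (fun x => Rmax (f x) (g x)).
Proof.
  intros Hf Hg x.
  apply continuity_pt_ext with (fun y => (f y + g y + Rabs (f y - g y)) / 2).
  - intros y. unfold Rmax. destruct (Rle_dec (f y) (g y)).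
    + rewrite Rabs_left1 by lra. field.
    + rewrite Rabs_right by lra. field.
  - apply continuity_mult; [apply continuity_plus; [apply continuity_plus|] | ]; auto.
    + apply (continuity_comp _ Rabs); [apply continuity_minus |]; auto.
      apply Rcontinuity_abs.
    + apply continuity_const. now intros ? ?.
Qed.

Lemma continuity_of_lipschitz (f : R -> R) (K : R) :
  (forall u v, Rabs (f u - f v) <= K * Rabs (u - v)) -> continuity f.
Proof.
  intros Hf x0 eps Heps.
  assert (HK : 0 <= K) by (specialize (Hf 1 0); pose proof (Rabs_pos (f 1 - f 0));
    rewrite Rminus_0_r, Rabs_R1 in Hf; lra).
  exists (eps / (K + 1)). split; [apply Rdiv_lt_0_compat; lra |].
  intros x [_ Hx]. simpl in *. unfold R_dist in *.
  apply Rle_lt_trans with (K * Rabs (x - x0)); [apply Hf |].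
  apply Rle_lt_trans with (K * (eps / (K + 1))); [apply Rmult_le_compat_l; lra |].
  apply Rmult_lt_reg_r with (K + 1); [lra |]. field_simplify; lra.
Qed.

Lemma continuity_phi : continuity phi.
Proof. apply (continuity_of_lipschitz phi 2), phi_lipschitz. Qed.

Lemma continuity_phi_iter (n : nat) : continuity (phi_iter n).
Proof.
  induction n as [|n IH].
  - apply derivable_continuous, derivable_id.
  - apply (continuity_comp _ phi IH continuity_phi).
Qed.

Lemma continuity_phi_star (n : nat) : continuity (phi_star n).
Proof.
  apply continuity_minus; [apply continuity_phi_iter |].
  apply continuity_const. now intros ? ?.
Qed.

#[local] Hint Resolve continuity_phi_star : continuity.

Ltac solve_continuity :=
  repeat match goal with
  | |- continuity (fun _ => _) => apply continuity_const; intros ? ?; reflexivity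
  | |- continuity (fun x => x) => exact (derivable_continuous _ derivable_id)
  | |- continuity (Rmult ?c) => change (continuity (fun x => c * x))
  | |- continuity (Rplus ?c) => change (continuity (fun x => c + x))
  | |- continuity (fun _ => _ + _) => apply continuity_plus
  | |- continuity (fun _ => _ - _) => apply continuity_minus
  | |- continuity (fun _ => _ * _) => apply continuity_mult
  | |- continuity (fun _ => _ ^ ?n) =>
      apply (continuity_comp _ (fun y => y ^ n));
      [| exact (derivable_continuous _ (derivable_pow n))]
  | |- continuity (fun _ => exp _) =>
      apply (continuity_comp _ exp); [| exact continuity_exp]
  | |- continuity (fun _ => Rabs _) =>
      apply (continuity_comp _ Rabs); [| exact Rcontinuity_abs]
  | |- continuity (fun _ => Rmax _ _) => apply continuity_Rmax
  | |- continuity (fun x => ?f (@?a x)) => apply (continuity_comp a f)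
  | |- continuity _ => solve [eauto with continuity]
  end.

Lemma Rabs_phi_star_le (n : nat) (x : R) : (1 <= n)%nat -> Rabs (phi_star n x) <= 1/2.
Proof.
  intros Hn. destruct n as [|n]; [lia |]. unfold phi_star.
  change (phi_iter (S n) x) with (phi (phi_iter n x)).
  pose proof (phi_range (phi_iter n x)). apply Rabs_le. lra.
Qed.

Definition periodic (p : R) (f : R -> R) : Prop := forall x, f (x + p) = f x.

Lemma phi_star_periodic (j n : nat) : (j < n)%nat -> periodic (/ 2 ^ j) (phi_star n).
Proof.
  intros Hjn x. destruct n as [|n]; [lia |]. unfold phi_star. rewrite !phi_iter_S.
  replace (2 ^ n * (x + / 2 ^ j)) with (2 ^ n * x + IZR (Z.of_nat (2 ^ (n - j)))).
  - now rewrite phi_add_IZR.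
  - rewrite <- INR_IZR_INZ, pow_INR.
    replace (INR 2) with 2 by (simpl; ring).
    replace (2 ^ n) with (2 ^ j * 2 ^ (n - j)) by (rewrite <- pow_add; f_equal; lia).
    pose proof (pow2_pos j). field. lra.
Qed.

Lemma periodic_INR_mult (p : R) (f : R -> R) (n : nat) (x : R) :
  periodic p f -> f (x + INR n * p) = f x.
Proof.
  intros Hp. induction n as [|n IH].
  - simpl. now rewrite Rmult_0_l, Rplus_0_r.
  - rewrite S_INR, <- IH, <- (Hp (x + INR n * p)). f_equal. ring.
Qed.

Lemma ex_RInt_continuity (f : R -> R) (a b : R) : continuity f -> ex_RInt f a b.
Proof.
  intros Hf. apply (@ex_RInt_continuous R_CompleteNormedModule).
  intros z _. apply continuity_pt_filterlim, Hf.
Qed.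

#[local] Hint Resolve ex_RInt_continuity : continuity.

Lemma RInt_plus_R (f g : R -> R) (a b : R) : continuity f -> continuity g ->
  RInt (fun x => f x + g x) a b = RInt f a b + RInt g a b.
Proof. intros. apply (@RInt_plus R_CompleteNormedModule); auto with continuity. Qed.

Lemma RInt_scal_R (f : R -> R) (a b l : R) : continuity f ->
  RInt (fun x => l * f x) a b = l * RInt f a b.
Proof. intros. apply (@RInt_scal R_CompleteNormedModule); auto with continuity. Qed.

Lemma RInt_shift (F : R -> R) (p a b : R) : continuity F ->
  RInt (fun x => F (x + p)) a b = RInt F (a + p) (b + p).
Proof.
  intros HF.
  assert (E := @RInt_comp_lin R_CompleteNormedModule F 1 p a b
    (ex_RInt_continuity F _ _ HF)).
  rewrite !Rmult_1_l in E. rewrite <- E.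
  apply RInt_ext. intros x _. unfold scal; simpl; unfold mult; simpl.
  now rewrite !Rmult_1_l.
Qed.

Lemma RInt_periodic_INR_mult (F : R -> R) (p : R) (n : nat) :
  continuity F -> periodic p F -> RInt F 0 (INR n * p) = INR n * RInt F 0 p.
Proof.
  intros HF Hp. induction n as [|n IH].
  - simpl. rewrite !Rmult_0_l. apply (@RInt_point R_CompleteNormedModule).
  - rewrite S_INR, <- (RInt_Chasles F 0 (INR n * p)) by auto with continuity.
    replace (RInt F (INR n * p) ((INR n + 1) * p)) with (RInt F 0 p).
    + rewrite IH. unfold plus. simpl. ring.
    + replace (INR n * p) with (0 + INR n * p) by ring.
      replace ((INR n + 1) * p) with (p + INR n * p) by ring.
      rewrite <- RInt_shift by auto.
      apply RInt_ext. intros. now rewrite periodic_INR_mult.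
Qed.

Lemma RInt_0_double (F : R -> R) (h : R) : continuity F ->
  RInt F 0 (2 * h) = RInt (fun x => F x + F (x + h)) 0 h.
Proof.
  intros HF.
  assert (HFh : continuity (fun x => F (x + h))).
  { apply (continuity_comp (fun x => x + h) F); [solve_continuity | exact HF]. }
  rewrite RInt_plus_R, RInt_shift by auto.
  rewrite Rplus_0_l. replace (2 * h) with (h + h) by ring.
  symmetry. apply (@RInt_Chasles R_CompleteNormedModule); auto with continuity.
Qed.

Lemma RInt_phi_star_symmetrize (m : nat) (W g : R -> R) :
  continuity W -> continuity g -> periodic (/ 2 ^ S m) W ->
  RInt (fun x => W x * g (phi_star (S m) x)) 0 1 =
  2 ^ m * RInt (fun x => W x * (g (2 ^ S m * x - 1/2) + g (1/2 - 2 ^ S m * x)))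
    0 (/ 2 ^ S m).
Proof.
  intros HW Hg HWp.
  set (u := 2 ^ m). assert (Hu : 0 < u) by apply pow2_pos.
  change (2 ^ S m) with (2 * u) in *.
  set (h := / (2 * u)).
  assert (Hh : u * h = 1/2) by (unfold h; field; lra).
  set (F := fun x => W x * g (phi_star (S m) x)).
  assert (HF : continuity F)
    by (apply continuity_mult, (continuity_comp _ g); auto with continuity).
  assert (HFp : periodic (/ u) F).
  { intros x. unfold F. rewrite (phi_star_periodic m (S m)) by lia.
    replace (x + / u) with (x + h + h) by (unfold h; field; lra).
    now rewrite !HWp. }
  assert (Hm : INR (2 ^ m) = u) by (rewrite pow_INR; unfold u; f_equal; simpl; ring).
  replace 1 with (INR (2 ^ m) * / u) at 1 by (rewrite Hm; field; lra).
  rewrite (RInt_periodic_INR_mult F (/ u)), Hm by auto. f_equal.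
  replace (/ u) with (2 * h) by (unfold h; field; lra).
  rewrite RInt_0_double by auto.
  apply RInt_ext. intros x Hx.
  assert (Hh0 : 0 < h) by (apply Rinv_0_lt_compat; lra).
  rewrite Rmin_left, Rmax_right in Hx by lra.
  assert (Hux : 0 < u * x < 1/2) by (split; [apply Rmult_lt_0_compat | rewrite <- Hh;
    apply Rmult_lt_compat_l]; lra).
  unfold F. rewrite HWp. unfold phi_star. rewrite !phi_iter_S. fold u.
  replace (u * (x + h)) with (u * x + 1/2) by lra.
  rewrite !phi_of_01 by lra. unfold tent.
  destruct (Rle_dec (u * x) (1/2)), (Rle_dec (u * x + 1/2) (1/2)); try lra.
  replace (2 * (1 - (u * x + 1/2)) - 1/2) with (1/2 - 2 * u * x) by lra.
  replace (2 * (u * x) - 1/2) with (2 * u * x - 1/2) by lra.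
  symmetry. apply Rmult_plus_distr_l.
Qed.

Lemma RInt_weighted_phi_star_le (m : nat) (W g : R -> R) (K : R) :
  continuity W -> continuity g -> periodic (/ 2 ^ S m) W -> (forall x, 0 <= W x) ->
  (forall t, Rabs t <= 1/2 -> g t + g (- t) <= 2 * K) ->
  RInt (fun x => W x * g (phi_star (S m) x)) 0 1 <= K * RInt W 0 1.
Proof.
  intros HW Hg HWp HW0 HgK.
  set (h := / 2 ^ S m).
  assert (Hh : 0 < h) by apply Rinv_0_lt_compat, pow2_pos.
  assert (HW1 : RInt W 0 1 = 2 ^ m * RInt (fun x => 2 * W x) 0 h).
  { assert (E1 := RInt_phi_star_symmetrize m W (fun _ => 1) HW
      ltac:(solve_continuity) HWp).
    cbv beta in E1. rewrite RInt_ext with (g := fun x => W x * 1), E1.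
    - f_equal. apply RInt_ext. intros. simpl. ring.
    - intros. simpl. ring. }
  rewrite (RInt_phi_star_symmetrize m W g HW Hg HWp), HW1.
  rewrite (Rmult_comm K), Rmult_assoc.
  apply Rmult_le_compat_l; [apply Rlt_le, pow2_pos |].
  rewrite (Rmult_comm _ K), <- RInt_scal_R by solve_continuity. fold h.
  apply RInt_le; [lra | apply ex_RInt_continuity; solve_continuity .. |].
  intros x Hx.
  assert (Hs : Rabs (2 ^ S m * x - 1/2) <= 1/2).
  { pose proof (pow2_pos (S m)).
    assert (2 ^ S m * h = 1) by (apply Rinv_r; lra).
    apply Rabs_le. split; nra. }
  specialize (HgK _ Hs). specialize (HW0 x).
  replace (1/2 - 2 ^ S m * x) with (- (2 ^ S m * x - 1/2)) by ring.
  nra.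
Qed.

Lemma exp_add_exp_opp_le (s : R) : exp s + exp (- s) <= 2 * exp (2 * s ^ 2).
Proof.
  assert (Hnonneg : forall s, 0 <= s -> exp s + exp (- s) <= 2 * exp (2 * s ^ 2)).
  { clear s. intros s Hs. pose proof (exp_ineq1_le (2 * s ^ 2)).
    destruct (Rlt_or_le s (1/2)) as [Hs1 | Hs1].
    - (* exp s <= 1 / (1 - s) and exp (- s) <= 1 / (1 + s), both below quadratics *)
      pose proof (exp_ineq1_le s). pose proof (exp_ineq1_le (- s)).
      assert (exp s * exp (- s) = 1) by (rewrite <- exp_plus, Rplus_opp_r; apply exp_0).
      pose proof (exp_pos s). pose proof (exp_pos (- s)).
      assert (exp s * (1 - s) <= 1) by nra.
      assert (exp (- s) * (1 + s) <= 1) by nra.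
      assert (exp s <= 1 + s + 2 * s ^ 2) by nra.
      assert (exp (- s) <= 1 - s + s ^ 2) by nra.
      nra.
    - assert (exp (- s) <= exp s) by (apply exp_le_compat; lra).
      assert (exp s <= exp (2 * s ^ 2)) by (apply exp_le_compat; nra).
      lra. }
  destruct (Rle_or_lt 0 s); [now apply Hnonneg |].
  pose proof (Hnonneg (- s) ltac:(lra)) as Hneg.
  rewrite Ropp_involutive in Hneg. replace ((- s) ^ 2) with (s ^ 2) in Hneg by ring. lra.
Qed.

Lemma exp_mul_add_exp_mul_opp_le (nu t : R) :
  Rabs t <= 1/2 -> exp (nu * t) + exp (nu * - t) <= 2 * exp (nu ^ 2 / 2).
Proof.
  intros Ht. replace (nu * - t) with (- (nu * t)) by ring.
  eapply Rle_trans; [apply exp_add_exp_opp_le |].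
  apply Rmult_le_compat_l, exp_le_compat; [lra |].
  assert (t ^ 2 <= 1/4) by (rewrite <- (pow2_abs t); pose proof (Rabs_pos t); nra).
  pose proof (pow2_ge_0 nu). replace ((nu * t) ^ 2) with (nu ^ 2 * t ^ 2) by ring. nra.
Qed.

Fixpoint sum_from (u : nat -> R) (N k : nat) : R :=
  match k with
  | O => 0
  | S k => u N + sum_from u (S N) k
  end.

Lemma sum_from_nonneg (u : nat -> R) (N k : nat) :
  (forall n, 0 <= u n) -> 0 <= sum_from u N k.
Proof.
  intros Hu. revert N. induction k as [|k IH]; intros N; simpl; [lra |].
  pose proof (Hu N). pose proof (IH (S N)). lra.
Qed.

Definition partial_tail (c : nat -> R) (N k : nat) (x : R) : R :=
  sum_from (fun n => c n * phi_star n x) N k.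

Lemma continuity_partial_tail (c : nat -> R) (N k : nat) : continuity (partial_tail c N k).
Proof.
  revert N. induction k as [|k IH]; intros N; unfold partial_tail; simpl.
  - solve_continuity.
  - apply continuity_plus; [solve_continuity | apply IH].
Qed.

#[local] Hint Resolve continuity_partial_tail : continuity.

Lemma partial_tail_periodic (c : nat -> R) (N k j : nat) :
  (j < N)%nat -> periodic (/ 2 ^ j) (partial_tail c N k).
Proof.
  revert N. induction k as [|k IH]; intros N HN x; unfold partial_tail; simpl; [reflexivity |].
  rewrite (phi_star_periodic j N HN). f_equal. apply IH. lia.
Qed.

Lemma RInt_exp_partial_tail_le (c : nat -> R) (mu : R) (N k : nat) : (1 <= N)%nat ->
  RInt (fun x => exp (mu * partial_tail c N k x)) 0 1
  <= exp (mu ^ 2 / 2 * sum_from (fun n => c n ^ 2) N k).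
Proof.
  revert N. induction k as [|k IH]; intros N HN.
  - unfold partial_tail. simpl. rewrite !Rmult_0_r, exp_0, RInt_const.
    unfold scal; simpl; unfold mult; simpl. lra.
  - destruct N as [|m]; [lia |].
    set (W x := exp (mu * partial_tail c (S (S m)) k x)).
    rewrite (RInt_ext _ (fun x => W x * exp (mu * c (S m) * phi_star (S m) x))).
    2:{ intros x _. unfold W, partial_tail. simpl. rewrite <- exp_plus. f_equal. ring. }
    eapply Rle_trans.
    { apply (RInt_weighted_phi_star_le m W (fun t => exp (mu * c (S m) * t))).
      - unfold W. solve_continuity.
      - solve_continuity.
      - intros x. unfold W. now rewrite (partial_tail_periodic c (S (S m)) k (S m)) by lia.
      - intros x. apply Rlt_le, exp_pos.
      - intros t Ht. now apply exp_mul_add_exp_mul_opp_le. }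
    eapply Rle_trans.
    { apply Rmult_le_compat_l; [apply Rlt_le, exp_pos | apply IH; lia]. }
    rewrite <- exp_plus. apply exp_le_compat. simpl. lra.
Qed.

Fixpoint running_max (u : nat -> R) (k : nat) : R :=
  match k with
  | O => u O
  | S k => Rmax (running_max u k) (u (S k))
  end.

Lemma running_max_ge (u : nat -> R) (j k : nat) : (j <= k)%nat -> u j <= running_max u k.
Proof.
  induction k as [|k IH]; intros Hjk; simpl.
  - replace j with O by lia. lra.
  - destruct (Nat.eq_dec j (S k)) as [-> | Hj]; [apply Rmax_r |].
    eapply Rle_trans; [apply IH; lia | apply Rmax_l].
Qed.

(* Doob's L^2 inequality through the potential 4 M X - 2 M^2 of the running
   maximum M: as M^2 + (4 M X - 2 M^2) <= 4 X^2, it suffices that the integral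
   of the potential stays nonnegative; by this pathwise step it grows at least
   by 4 M (X_(k+1) - X_k), whose integral is nonnegative for a submartingale. *)
Lemma Rmax_potential_step (m x0 x1 : R) :
  4 * Rmax m x1 * x1 - 2 * Rmax m x1 ^ 2 >= 4 * m * x0 - 2 * m ^ 2 + 4 * m * (x1 - x0).
Proof. unfold Rmax. destruct (Rle_dec m x1); nra. Qed.

Section DoobL2.

Variable X : nat -> R -> R.
Hypothesis X_cont : forall k, continuity (X k).

Let M (k : nat) (x : R) : R := running_max (fun j => X j x) k.

Lemma continuity_running_max (k : nat) : continuity (M k).
Proof.
  induction k as [|k IH]; unfold M; simpl; [apply X_cont |].
  apply continuity_Rmax; [apply IH | apply X_cont].
Qed.

#[local] Hint Resolve X_cont continuity_running_max : continuity.

Variable n : nat.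
Hypothesis X_submartingale : forall k, (k < n)%nat ->
  0 <= RInt (fun x => M k x * (X (S k) x - X k x)) 0 1.

Lemma RInt_doob_potential_nonneg (k : nat) : (k <= n)%nat ->
  0 <= RInt (fun x => 4 * M k x * X k x - 2 * M k x ^ 2) 0 1.
Proof.
  induction k as [|k IH]; intros Hk.
  - apply RInt_ge_0; [lra | apply ex_RInt_continuity; solve_continuity |].
    intros x _. unfold M. simpl. nra.
  - eapply Rle_trans; [| apply RInt_le with
      (f := fun x => (4 * M k x * X k x - 2 * M k x ^ 2)
                     + 4 * (M k x * (X (S k) x - X k x)))].
    + rewrite RInt_plus_R, RInt_scal_R by solve_continuity.
      pose proof (IH ltac:(lia)). pose proof (X_submartingale k Hk). lra.
    + lra.
    + apply ex_RInt_continuity. solve_continuity.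
    + apply ex_RInt_continuity. solve_continuity.
    + intros x _. pose proof (Rmax_potential_step (M k x) (X k x) (X (S k) x)).
      change (M (S k) x) with (Rmax (M k x) (X (S k) x)). lra.
Qed.

Theorem doob_L2_running_max :
  RInt (fun x => M n x ^ 2) 0 1 <= 4 * RInt (fun x => X n x ^ 2) 0 1.
Proof.
  pose proof (RInt_doob_potential_nonneg n (le_n n)).
  rewrite <- RInt_scal_R by solve_continuity.
  apply Rle_trans with
    (RInt (fun x => M n x ^ 2 + (4 * M n x * X n x - 2 * M n x ^ 2)) 0 1).
  - rewrite RInt_plus_R by solve_continuity. lra.
  - apply RInt_le; [lra | apply ex_RInt_continuity; solve_continuity .. |].
    intros x _. pose proof (pow2_ge_0 (M n x - 2 * X n x)). nra.
Qed.

End DoobL2.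

Lemma running_max_ext (u v : nat -> R) (k : nat) :
  (forall j, (j <= k)%nat -> u j = v j) -> running_max u k = running_max v k.
Proof.
  induction k as [|k IH]; intros Huv; simpl.
  - apply Huv. lia.
  - rewrite IH by (intros; apply Huv; lia). now rewrite Huv.
Qed.

Lemma fold_right_Rmax_spec (f : nat -> R) (d : R) (l : list nat) :
  (d <= fold_right Rmax d (map f l) /\
   forall N, In N l -> f N <= fold_right Rmax d (map f l)) /\
  (fold_right Rmax d (map f l) = d \/
   exists N, In N l /\ fold_right Rmax d (map f l) = f N).
Proof.
  induction l as [|n l [[IHd IHl] IHatt]]; simpl.
  - split; [split; [lra | tauto] | now left].
  - split; [split |].
    + eapply Rle_trans; [apply IHd | apply Rmax_r].
    + intros N [<- | HN]; [apply Rmax_l |].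
      eapply Rle_trans; [apply IHl; auto | apply Rmax_r].
    + destruct (Rle_dec (f n) (fold_right Rmax d (map f l))) as [H | H].
      * rewrite Rmax_right by exact H.
        destruct IHatt as [E | [N [HN E]]]; [now left | right; eauto].
      * rewrite Rmax_left by lra. right. eauto.
Qed.

Lemma max_range_ge (f : nat -> R) (a b N : nat) :
  (a <= N <= b)%nat -> f N <= max_range f a b.
Proof.
  intros HN. apply (fold_right_Rmax_spec f (f a) (seq a (S (b - a)))), in_seq. lia.
Qed.

Lemma max_range_attained (f : nat -> R) (a b : nat) :
  (a <= b)%nat -> exists N, (a <= N <= b)%nat /\ max_range f a b = f N.
Proof.
  intros Hab. unfold max_range.
  destruct (fold_right_Rmax_spec f (f a) (seq a (S (b - a))))
    as [_ [E | [N [HN E]]]].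
  - exists a. split; [lia | exact E].
  - apply in_seq in HN. exists N. split; [lia | exact E].
Qed.

Lemma max_range_dist (f g : nat -> R) (a b : nat) (e : R) : (a <= b)%nat ->
  (forall N, (a <= N <= b)%nat -> Rabs (f N - g N) <= e) ->
  Rabs (max_range f a b - max_range g a b) <= e.
Proof.
  intros Hab Hfg.
  destruct (max_range_attained f a b Hab) as [Nf [HNf Ef]].
  destruct (max_range_attained g a b Hab) as [Ng [HNg Eg]].
  pose proof (max_range_ge f a b Ng HNg). pose proof (max_range_ge g a b Nf HNf).
  pose proof (Hfg Nf HNf) as Hf. pose proof (Hfg Ng HNg) as Hg.
  apply Rabs_le_between in Hf, Hg. apply Rabs_le. lra.
Qed.

Lemma continuity_max_range (F : nat -> R -> R) (a b : nat) : (a <= b)%nat ->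
  (forall N, (a <= N <= b)%nat -> continuity (F N)) ->
  continuity (fun x => max_range (fun N => F N x) a b).
Proof.
  intros Hab HF. unfold max_range.
  assert (Hl : forall N, In N (seq a (S (b - a))) -> continuity (F N))
    by (intros N HN; apply in_seq in HN; apply HF; lia).
  assert (Ha : continuity (F a)) by (apply Hl, in_seq; lia).
  induction (seq a (S (b - a))) as [|n l IH]; simpl; [exact Ha |].
  apply continuity_Rmax; [apply Hl; now left | apply IH; intros; apply Hl; now right].
Qed.

Lemma exp_mul_max_range_abs_le (f : nat -> R) (lam : R) (a b : nat) : (a <= b)%nat ->
  exists N, (a <= N <= b)%nat /\
  exp (lam * max_range (fun N => Rabs (f N)) a b) <= exp (lam * f N) + exp (- lam * f N).
Proof.
  intros Hab.
  assert (Habs : forall N, exp (lam * Rabs (f N)) <= exp (lam * f N) + exp (- lam * f N)).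
  { intros N. pose proof (exp_pos (lam * f N)). pose proof (exp_pos (- lam * f N)).
    unfold Rabs. destruct (Rcase_abs (f N)).
    - replace (lam * - f N) with (- lam * f N) by ring. lra.
    - lra. }
  destruct (Rle_or_lt 0 lam) as [Hl | Hl].
  - destruct (max_range_attained (fun N => Rabs (f N)) a b Hab) as [N [HN E]].
    exists N. split; [exact HN |]. rewrite E. apply Habs.
  - exists a. split; [lia |]. eapply Rle_trans; [| apply Habs]. apply exp_le_compat.
    pose proof (max_range_ge (fun N => Rabs (f N)) a b a ltac:(lia)). simpl in *. nra.
Qed.

Section MaximalPartialTail.

Variables (c : nat -> R) (a b L : nat).
Hypotheses (Ha : (1 <= a)%nat) (Hab : (a <= b)%nat) (HbL : (b < L)%nat).

Let T (N : nat) (x : R) : R := partial_tail c N (L - N) x.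

(* Time runs backwards: X mu k is built from T (b - k), and N = b - k decreases to a. *)
Let X (mu : R) (k : nat) (x : R) : R := exp (mu / 2 * T (b - k) x).

Lemma continuity_X (mu : R) (k : nat) : continuity (X mu k).
Proof. unfold X, T. solve_continuity. Qed.

Lemma X_sq (mu : R) (N : nat) (x : R) : (N <= b)%nat ->
  X mu (b - N) x ^ 2 = exp (mu * T N x).
Proof.
  intros HN. unfold X. replace (b - (b - N))%nat with N by lia.
  simpl. rewrite Rmult_1_r, <- exp_plus. f_equal. field.
Qed.

Lemma X_periodic (mu : R) (j i : nat) : (i < b - j)%nat -> periodic (/ 2 ^ i) (X mu j).
Proof. intros Hi x. unfold X, T. now rewrite partial_tail_periodic. Qed.

Lemma X_step (mu : R) (k : nat) (x : R) : (k < b - a)%nat ->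
  X mu (S k) x = X mu k x * exp (mu / 2 * c (b - S k)%nat * phi_star (b - S k) x).
Proof.
  intros Hk. unfold X, T, partial_tail.
  replace (L - (b - S k))%nat with (S (L - (b - k))) by lia.
  simpl sum_from. replace (S (b - S k)) with (b - k)%nat by lia.
  rewrite <- exp_plus. f_equal. ring.
Qed.

Lemma X_submartingale (mu : R) (k : nat) : (k < b - a)%nat ->
  0 <= RInt (fun x => running_max (fun j => X mu j x) k * (X mu (S k) x - X mu k x)) 0 1.
Proof.
  intros Hk.
  destruct (b - S k)%nat as [|m] eqn:Hm; [lia |].
  set (W x := running_max (fun j => X mu j x) k * X mu k x).
  set (nu := mu / 2 * c (S m)).
  assert (HW : continuity W).
  { apply continuity_mult; [apply (continuity_running_max (X mu)) |]; apply continuity_X. }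
  rewrite (RInt_ext _ (fun x => -1 * (W x * (1 - exp (nu * phi_star (S m) x))))).
  2:{ intros x _. rewrite X_step, Hm by lia. unfold W, nu. simpl. ring. }
  rewrite RInt_scal_R by solve_continuity.
  assert (Hle : RInt (fun x => W x * (1 - exp (nu * phi_star (S m) x))) 0 1 <= 0 * RInt W 0 1).
  { apply (RInt_weighted_phi_star_le m W (fun t => 1 - exp (nu * t))).
    - exact HW.
    - solve_continuity.
    - intros x. unfold W. rewrite X_periodic by lia.
      now rewrite (running_max_ext (fun j => X mu j (x + / 2 ^ S m)) (fun j => X mu j x))
        by (intros; apply X_periodic; lia).
    - intros x. unfold W. pose proof (running_max_ge (fun j => X mu j x) k k (le_n k)).
      pose proof (exp_pos (mu / 2 * T (b - k) x)). unfold X in *. nra.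
    - intros t _. pose proof (exp_ineq1_le (nu * t)). pose proof (exp_ineq1_le (nu * - t)).
      lra. }
  lra.
Qed.

Lemma RInt_exp_max_partial_tail_le (lam : R) :
  RInt (fun x => exp (lam * max_range (fun N => Rabs (T N x)) a b)) 0 1
  <= 8 * exp (lam ^ 2 / 2 * sum_from (fun n => c n ^ 2) a (L - a)).
Proof.
  set (M mu x := running_max (fun j => X mu j x) (b - a)).
  assert (HM : forall mu, continuity (M mu))
    by (intros; apply (continuity_running_max (X mu)), continuity_X).
  assert (HM2 : forall mu, RInt (fun x => M mu x ^ 2) 0 1
                           <= 4 * exp (mu ^ 2 / 2 * sum_from (fun n => c n ^ 2) a (L - a))).
  { intros mu. eapply Rle_trans.
    - apply (doob_L2_running_max (X mu) (continuity_X mu) (b - a)), X_submartingale.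
    - apply Rmult_le_compat_l; [lra |].
      rewrite (RInt_ext _ (fun x => exp (mu * T a x))) by (intros; simpl; now apply X_sq).
      now apply RInt_exp_partial_tail_le. }
  apply Rle_trans with (RInt (fun x => M lam x ^ 2 + M (- lam) x ^ 2) 0 1).
  - apply RInt_le; [lra | apply ex_RInt_continuity .. |].
    + apply (continuity_comp _ exp); [| apply continuity_exp].
      apply continuity_mult; [solve_continuity |].
      apply continuity_max_range; [exact Hab |]. intros N _. unfold T. solve_continuity.
    + solve_continuity.
    + intros x _.
      destruct (exp_mul_max_range_abs_le (fun N => T N x) lam a b Hab) as [N [HN Hexp]].
      assert (HXM : forall mu, exp (mu * T N x) <= M mu x ^ 2).
      { intros mu. rewrite <- X_sq by lia.
        pose proof (running_max_ge (fun j => X mu j x) (b - N) (b - a) ltac:(lia)).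
        pose proof (exp_pos (mu / 2 * T (b - (b - N)) x)). unfold M, X in *. nra. }
      pose proof (HXM lam). pose proof (HXM (- lam)). lra.
  - rewrite RInt_plus_R by solve_continuity.
    pose proof (HM2 lam). pose proof (HM2 (- lam)).
    replace ((- lam) ^ 2) with (lam ^ 2) in * by ring. lra.
Qed.

End MaximalPartialTail.

Lemma Series_nonneg (u : nat -> R) : (forall n, 0 <= u n) -> ex_series u -> 0 <= Series u.
Proof.
  intros Hu Hs.
  replace 0 with (Series (fun _ => 0 * 0)) by (rewrite Series_scal_l; ring).
  apply Series_le; [intros n; rewrite Rmult_0_l; split; [lra | apply Hu] | exact Hs].
Qed.

Lemma ex_series_shift (u : nat -> R) (N k : nat) :
  ex_series (fun j => u (N + j)%nat) -> ex_series (fun j => u (N + k + j)%nat).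
Proof.
  intros Hs. apply (ex_series_incr_n _ k) in Hs.
  eapply ex_series_ext; [| exact Hs]. intros j. simpl. f_equal. lia.
Qed.

Lemma Series_shift_sum_from (u : nat -> R) (N k : nat) : ex_series (fun j => u (N + j)%nat) ->
  Series (fun j => u (N + j)%nat) = sum_from u N k + Series (fun j => u (N + k + j)%nat).
Proof.
  revert N. induction k as [|k IH]; intros N Hs; simpl.
  - rewrite Rplus_0_l. apply Series_ext. intros j. f_equal. lia.
  - rewrite Series_incr_1, Nat.add_0_r by exact Hs.
    rewrite (Series_ext _ (fun j => u (S N + j)%nat)) by (intros; f_equal; lia).
    rewrite IH by (apply (ex_series_ext (fun j => u (N + 1 + j)%nat));
      [intros; f_equal; lia | exact (ex_series_shift u N 1 Hs)]).
    rewrite (Series_ext (fun j => u (S N + k + j)%nat) (fun j => u (N + S k + j)%nat))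
      by (intros; f_equal; lia).
    ring.
Qed.

Lemma term_le_Series (u : nat -> R) (N j : nat) : (forall n, 0 <= u n) ->
  ex_series (fun i => u (N + i)%nat) -> u (N + j)%nat <= Series (fun i => u (N + i)%nat).
Proof.
  intros Hu Hs. rewrite (Series_shift_sum_from u N j Hs).
  pose proof (ex_series_shift u N j Hs) as Hs'.
  rewrite Series_incr_1, Nat.add_0_r by exact Hs'.
  pose proof (sum_from_nonneg u N j Hu).
  pose proof (Series_nonneg (fun i => u (N + j + S i)%nat) (fun i => Hu _)
    (proj1 (ex_series_incr_1 _) Hs')).
  lra.
Qed.

Section AbsolutelySummable.

Variable c : nat -> R.
Hypothesis hc : ex_series (fun k => Rabs (c (S k))).

Lemma ex_series_abs_from (N : nat) : (1 <= N)%nat -> ex_series (fun j => Rabs (c (N + j)%nat)).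
Proof.
  intros HN. apply (ex_series_shift (fun n => Rabs (c (S n))) 0 (N - 1)) in hc.
  eapply ex_series_ext; [| exact hc]. intros j. simpl. f_equal. f_equal. lia.
Qed.

Lemma Rabs_term_le (n : nat) (x : R) : (1 <= n)%nat ->
  Rabs (c n * phi_star n x) <= Rabs (c n).
Proof.
  intros Hn. rewrite Rabs_mult. pose proof (Rabs_phi_star_le n x Hn).
  pose proof (Rabs_pos (c n)). pose proof (Rabs_pos (phi_star n x)). nra.
Qed.

Lemma ex_series_abs_terms (N : nat) (x : R) : (1 <= N)%nat ->
  ex_series (fun j => Rabs (c (N + j)%nat * phi_star (N + j) x)).
Proof.
  intros HN.
  apply (@ex_series_le R_AbsRing R_CompleteNormedModule _ (fun j => Rabs (c (N + j)%nat))).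
  - intros j. change (norm ?y) with (Rabs y). rewrite Rabs_Rabsolu. apply Rabs_term_le. lia.
  - exact (ex_series_abs_from N HN).
Qed.

Lemma Rabs_tail_sum_le (N : nat) (x : R) : (1 <= N)%nat ->
  Rabs (tail_sum c N x) <= Series (fun j => Rabs (c (N + j)%nat)).
Proof.
  intros HN. unfold tail_sum.
  eapply Rle_trans; [apply Series_Rabs, ex_series_abs_terms, HN |].
  apply Series_le; [| exact (ex_series_abs_from N HN)].
  intros j. split; [apply Rabs_pos | apply Rabs_term_le; lia].
Qed.

Lemma tail_sum_sub_partial_tail (N L : nat) (x : R) : (1 <= N)%nat -> (N <= L)%nat ->
  tail_sum c N x - partial_tail c N (L - N) x = tail_sum c L x.
Proof.
  intros HN HNL. unfold tail_sum, partial_tail.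
  rewrite (Series_shift_sum_from (fun n => c n * phi_star n x) N (L - N)).
  - replace (N + (L - N))%nat with L by lia. ring.
  - apply ex_series_Rabs, ex_series_abs_terms, HN.
Qed.

Lemma tail_abs_small (eps : R) : 0 < eps ->
  exists L0, forall L, (L0 <= L)%nat -> Series (fun j => Rabs (c (L + j)%nat)) <= eps.
Proof.
  intros Heps. set (v k := Rabs (c (S k))).
  pose proof (proj1 (is_series_Reals v (Series v)) (Series_correct v hc) eps Heps)
    as [L0 HL0].
  exists (S (S L0)). intros L HL.
  rewrite (Series_ext _ (fun j => v (L - 1 + j)%nat))
    by (intros j; unfold v; do 2 f_equal; lia).
  specialize (HL0 (Nat.pred (L - 1)) ltac:(lia)). unfold Rdist in HL0.
  rewrite (Series_incr_n v (L - 1)) in HL0 by (auto; lia).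
  apply Rabs_def2 in HL0. lra.
Qed.

Lemma continuity_tail_sum (N : nat) : (1 <= N)%nat -> continuity (tail_sum c N).
Proof.
  intros HN x0 eps Heps.
  destruct (tail_abs_small (eps / 3)) as [L0 HL0]; [lra |].
  set (L := Nat.max L0 N).
  assert (Happrox : forall x, Rabs (tail_sum c N x - partial_tail c N (L - N) x) <= eps / 3).
  { intros x. rewrite tail_sum_sub_partial_tail by lia.
    eapply Rle_trans; [apply Rabs_tail_sum_le; lia | apply HL0; lia]. }
  destruct (continuity_partial_tail c N (L - N) x0 (eps / 3)) as [d [Hd Hcont]]; [lra |].
  exists d. split; [exact Hd |]. intros x Hx. specialize (Hcont x Hx).
  simpl in *. unfold R_dist in *.
  pose proof (Happrox x) as H1. pose proof (Happrox x0) as H2.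
  apply Rabs_le_between in H1, H2. apply Rabs_def2 in Hcont. apply Rabs_def1; lra.
Qed.

Lemma sum_from_sq_le_Series (a k : nat) : (1 <= a)%nat ->
  sum_from (fun n => c n ^ 2) a k <= Series (fun j => c (a + j)%nat ^ 2).
Proof.
  intros Ha.
  set (B := Series (fun j => Rabs (c (a + j)%nat))).
  assert (Habs := ex_series_abs_from a Ha).
  assert (Hsq : ex_series (fun j => c (a + j)%nat ^ 2)).
  { apply (@ex_series_le R_AbsRing R_CompleteNormedModule _ (fun j => B * Rabs (c (a + j)%nat))).
    - intros j. change (norm ?y) with (Rabs y).
      pose proof (term_le_Series (fun n => Rabs (c n)) a j (fun n => Rabs_pos _) Habs).
      rewrite <- RPow_abs. simpl. rewrite Rmult_1_r.
      pose proof (Rabs_pos (c (a + j)%nat)). cbv beta in H. fold B in H. nra.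
    - now apply (@ex_series_scal_l R_AbsRing R_NormedModule). }
  rewrite (Series_shift_sum_from (fun n => c n ^ 2) a k Hsq).
  pose proof (Series_nonneg (fun j => c (a + k + j)%nat ^ 2) (fun j => pow2_ge_0 _)
    (ex_series_shift (fun n => c n ^ 2) a k Hsq)).
  lra.
Qed.

End AbsolutelySummable.

Lemma RInt_exp_max_tail_sum_le (c : nat -> R) (lam : R) (a b L : nat) :
  ex_series (fun k => Rabs (c (S k))) -> (1 <= a)%nat -> (a <= b)%nat -> (b <= L)%nat ->
  RInt (fun x => exp (lam * max_range (fun N => Rabs (tail_sum c N x)) a b)) 0 1
  <= exp (Rabs lam * Series (fun j => Rabs (c (L + j)%nat)))
     * RInt (fun x => exp (lam * max_range (fun N => Rabs (partial_tail c N (L - N) x)) a b)) 0 1.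
Proof.
  intros hc Ha Hab HbL.
  set (r := Series (fun j => Rabs (c (L + j)%nat))).
  rewrite <- RInt_scal_R.
  2:{ solve_continuity. apply continuity_max_range; [exact Hab |].
      intros N _. solve_continuity. }
  apply RInt_le; [lra | apply ex_RInt_continuity .. |].
  - solve_continuity. apply continuity_max_range; [exact Hab |].
    intros N HN. apply (continuity_comp _ Rabs); [| exact Rcontinuity_abs].
    apply (continuity_tail_sum c hc). lia.
  - solve_continuity. apply continuity_max_range; [exact Hab |].
    intros N _. solve_continuity.
  - intros x _. rewrite <- exp_plus. apply exp_le_compat.
    assert (Hdist : Rabs (max_range (fun N => Rabs (tail_sum c N x)) a b
               - max_range (fun N => Rabs (partial_tail c N (L - N) x)) a b) <= r).
    { apply max_range_dist; [exact Hab |]. intros N HN.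
      eapply Rle_trans; [apply Rabs_triang_inv2 |].
      rewrite (tail_sum_sub_partial_tail c hc) by lia. apply (Rabs_tail_sum_le c hc). lia. }
    set (M1 := max_range _ a b) in Hdist |- *. set (M2 := max_range _ a b) in Hdist |- *.
    pose proof (Rle_abs (lam * (M1 - M2))). rewrite Rabs_mult in H.
    pose proof (Rabs_pos lam).
    assert (Rabs lam * Rabs (M1 - M2) <= Rabs lam * r) by (apply Rmult_le_compat_l; lra).
    lra.
Qed.

Lemma le_of_forall_le_exp_mul (I B K : R) : 0 < B -> 0 <= K ->
  (forall eps, 0 < eps -> I <= exp (K * eps) * B) -> I <= B.
Proof.
  intros HB HK Hle. destruct (Rle_or_lt I B) as [| HIB]; [assumption | exfalso].
  set (q := I / B).
  assert (Hq : 1 < q) by (unfold q; apply Rmult_lt_reg_r with B; [lra |]; field_simplify; lra).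
  assert (Hlnq : 0 < ln q) by (rewrite <- ln_1; apply ln_increasing; lra).
  specialize (Hle (ln q / (K + 1)) ltac:(apply Rdiv_lt_0_compat; lra)).
  assert (K * (ln q / (K + 1)) < ln q)
    by (apply Rmult_lt_reg_r with (K + 1); [lra |]; field_simplify; nra).
  assert (exp (K * (ln q / (K + 1))) < q)
    by (rewrite <- (exp_ln q) at 2 by lra; now apply exp_increasing).
  assert (exp (K * (ln q / (K + 1))) * B < q * B) by (apply Rmult_lt_compat_r; lra).
  replace (q * B) with I in * by (unfold q; field; lra). lra.
Qed.

Theorem lemma2p7 (c : nat -> R) (a b : nat) (lam : R)
  (hc : ex_series (fun k => Rabs (c (S k))))
  (ha : (1 <= a)%nat) (hab : (a < b)%nat) :
  RInt (fun x => exp (lam * max_range (fun N => Rabs (tail_sum c N x)) a b)) 0 1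
  <= 8 * exp (lam ^ 2 / 2 * Series (fun k => (c (a + k)%nat) ^ 2)).
Proof.
  apply (le_of_forall_le_exp_mul _ _ (Rabs lam));
    [pose proof (exp_pos (lam ^ 2 / 2 * Series (fun k => c (a + k)%nat ^ 2))); lra
    | apply Rabs_pos |].
  intros eps Heps.
  destruct (tail_abs_small c hc eps Heps) as [L0 HL0].
  set (L := Nat.max L0 (S b)).
  eapply Rle_trans; [apply (RInt_exp_max_tail_sum_le c lam a b L); auto; lia |].
  apply Rmult_le_compat; [apply Rlt_le, exp_pos | | |].
  - apply RInt_ge_0; [lra | apply ex_RInt_continuity | intros; apply Rlt_le, exp_pos].
    solve_continuity. apply continuity_max_range; [lia |]. intros N _. solve_continuity.
  - apply exp_le_compat, Rmult_le_compat_l; [apply Rabs_pos | apply HL0; lia].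
  - eapply Rle_trans; [apply RInt_exp_max_partial_tail_le; lia |].
    apply Rmult_le_compat_l, exp_le_compat, Rmult_le_compat_l; [lra | |].
    + pose proof (pow2_ge_0 lam). lra.
    + now apply sum_from_sq_le_Series.
Qed.
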